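(* Let $C\subset[0,1]^2$ be a Cantor set generated by a sequence of positive integers $(n_k)_{k\ge1}$ with $n_{2k-1}\ge n_{2k}$ for all $k$ (construction described in the context). Then $\pi_0(C)=[0,1]$, where $\pi_0(x,y)=x$.
   Context: Let $(n_k)_{k\ge1}$ be positive integers with $n_{2k-1}\ge n_{2k}$ for all $k\ge1$, and set $N_j=n_1+\dots+n_j$, $N_0=0$. All squares below are closed grid squares, i.e. squares $[i4^{-N},(i+1)4^{-N}]\times[j4^{-N},(j+1)4^{-N}]$; a column of width $4^{-N}$ is a strip $[j4^{-N},(j+1)4^{-N}]\times[0,1]$. Let $C_0=\{[0,1]^2\}$. For $k\ge0$, given the collection $C_{2k}$ of squares of side $4^{-N_{2k}}$: (i) each $Q\in C_{2k}$ is subdivided into $4^{2n_{2k+1}}$ squares of side $4^{-N_{2k+1}}$ and $2^{3n_{2k+1}}$ of them are chosen so that each column of width $4^{-N_{2k+1}}$ meeting the interior of $Q$ contains exactly $2^{n_{2k+1}}$ chosen squares inside $Q$; $C_{2k+1}$ is the collection of all chosen squares. (ii) Each square of $C_{2k+1}$ is subdivided into $4^{2n_{2k+2}}$ squares of side $4^{-N_{2k+2}}$ and $2^{n_{2k+2}}$ of them are chosen, so that for each $Q\in C_{2k}$: every column of width $4^{-N_{2k+2}}$ meeting the interior of $Q$ contains at least one chosen square inside $Q$; and among the chosen squares inside $Q$ there are two whose orthogonal projections onto the line $y=x$ coincide, and two whose orthogonal projections onto the line $y=-x$ coincide. $C_{2k+2}$ is the collection of all chosen squares. Identifying $C_m$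 with the union of its squares, the Cantor set generated is $C=\bigcap_{m\ge1}C_m$. *)

From Stdlib Require Import Reals List Arith Bool.
Import ListNotations.

(* The sequence (n_k)_{k>=1} is a function n : nat -> nat; n 0 is unused.
   N_j = n_1 + ... + n_j, N_0 = 0. *)
Fixpoint NN (n : nat -> nat) (j : nat) : nat :=
  match j with
  | 0 => 0
  | S j' => NN n j' + n (S j')
  end.

(* A grid square of side 4^{-N} is indexed by (i, j) : it is
   [i 4^{-N}, (i+1) 4^{-N}] x [j 4^{-N}, (j+1) 4^{-N}].
   The collection C_m (of squares of side 4^{-N_m}) is encoded by its
   characteristic function  C m : nat -> nat -> bool  (C m i j = true iff the
   square (i,j) of level N_m belongs to C_m). *)
Definition Collections := nat -> nat -> nat -> bool.

(* A square (i',j') of level N+d lies inside the square (i,j) of level N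
   iff i' / 4^d = i and j' / 4^d = j.  Likewise a column c of width
   4^{-(N+d)} meets the interior of the square (i,j) of level N iff
   c / 4^d = i. *)
Definition inside (d i' j' i j : nat) : Prop := i' / 4 ^ d = i /\ j' / 4 ^ d = j.

Definition col_count (C : Collections) (m c j d : nat) : nat :=
  length (filter (fun t => C m c (j * 4 ^ d + t)) (seq 0 (4 ^ d))).

Definition sq_count (C : Collections) (m i j d : nat) : nat :=
  fold_right plus 0
    (map (fun s => col_count C m (i * 4 ^ d + s) j d) (seq 0 (4 ^ d))).

Definition valid_construction (n : nat -> nat) (C : Collections) : Prop :=
  (forall i j, C 0 i j = andb (Nat.eqb i 0) (Nat.eqb j 0)) /\
  (forall k, let a := n (2 * k + 1) in
     (forall i j, C (2 * k + 1) i j = true ->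
        C (2 * k) (i / 4 ^ a) (j / 4 ^ a) = true) /\
     (forall i j, C (2 * k) i j = true ->
        sq_count C (2 * k + 1) i j a = 2 ^ (3 * a) /\
        (forall c, c / 4 ^ a = i -> col_count C (2 * k + 1) c j a = 2 ^ a))) /\
  (forall k, let b := n (2 * k + 2) in let d := n (2 * k + 1) + b in
     (forall i j, C (2 * k + 2) i j = true ->
        C (2 * k + 1) (i / 4 ^ b) (j / 4 ^ b) = true) /\
     (forall i j, C (2 * k + 1) i j = true ->
        sq_count C (2 * k + 2) i j b = 2 ^ b) /\
     (forall i j, C (2 * k) i j = true ->
        (forall c, c / 4 ^ d = i ->
           exists r, r / 4 ^ d = j /\ C (2 * k + 2) c r = true) /\
        (* two distinct chosen squares inside Q with the same projection
           onto the line y = x  (i.e. equal i + j) *)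
        (exists a1 b1 a2 b2, (a1, b1) <> (a2, b2) /\
           inside d a1 b1 i j /\ inside d a2 b2 i j /\
           C (2 * k + 2) a1 b1 = true /\ C (2 * k + 2) a2 b2 = true /\
           a1 + b1 = a2 + b2) /\
        (* two distinct chosen squares inside Q with the same projection
           onto the line y = -x  (i.e. equal i - j) *)
        (exists a1 b1 a2 b2, (a1, b1) <> (a2, b2) /\
           inside d a1 b1 i j /\ inside d a2 b2 i j /\
           C (2 * k + 2) a1 b1 = true /\ C (2 * k + 2) a2 b2 = true /\
           a1 + b2 = a2 + b1))).

Definition closed_square (N i j : nat) (p : R * R) : Prop :=
  (INR i / 4 ^ N <= fst p <= (INR i + 1) / 4 ^ N)%R /\
  (INR j / 4 ^ N <= snd p <= (INR j + 1) / 4 ^ N)%R.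

Definition cantor_set (n : nat -> nat) (C : Collections) (p : R * R) : Prop :=
  forall m, 1 <= m -> exists i j, C m i j = true /\ closed_square (NN n m) i j p.

(* For x in [0,1], rule (ii) lets us pick, level after level, a square of C_{2k} whose
   column contains x inside the square picked at the previous even level.  Their rows
   form nested intervals, whose common point y gives (x, y) in every C_{2k}, hence also
   in the parent squares of C_{2k+1}.  Conversely every square of C_1 lies in [0,1]^2. *)

From Stdlib Require Import Reals Arith Lra Lia ClassicalEpsilon.
Open Scope R_scope.

Lemma nat_dependent_choice {A : Type} (P : nat -> A -> Prop) (Rel : nat -> A -> A -> Prop)
    (a0 : A) :
  P 0%nat a0 -> (forall k a, P k a -> exists b, P (S k) b /\ Rel k a b) ->
  exists f : nat -> A, forall k, P k (f k) /\ Rel k (f k) (f (S k)).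
Proof.
  intros h0 hstep.
  pose (next k a := epsilon (inhabits a0) (fun b => P k a -> P (S k) b /\ Rel k a b)).
  assert (hnext : forall k a, P k a -> P (S k) (next k a) /\ Rel k a (next k a)).
  { intros k a hka.
    apply (epsilon_spec (inhabits a0) (fun b => P k a -> P (S k) b /\ Rel k a b)); [|exact hka].
    destruct (hstep k a hka) as [b hb]. now exists b. }
  pose (f := fix f k := match k with 0%nat => a0 | S k => next k (f k) end).
  assert (hf : forall k, P k (f k)).
  { induction k as [|k IH]; [exact h0|apply (hnext k _ IH)]. }
  exists f. intros k. split; [apply hf|apply (hnext k _ (hf k))].
Qed.

Lemma nested_intervals_common_point (lo up : nat -> R) :
  (forall k, lo k <= up k) -> (forall k, lo k <= lo (S k)) -> (forall k, up (S k) <= up k) ->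
  exists y, forall k, lo k <= y <= up k.
Proof.
  intros hlu hlo hup.
  assert (hmono : forall k j, (k <= j)%nat -> lo k <= lo j /\ up j <= up k).
  { intros k j hkj. induction hkj as [|j _ IH]; [lra|].
    specialize (hlo j). specialize (hup j). lra. }
  assert (hcross : forall j k, lo j <= up k).
  { intros j k. destruct (Nat.le_ge_cases j k) as [h|h];
      destruct (hmono _ _ h); pose proof (hlu j); pose proof (hlu k); lra. }
  destruct (completeness (fun v => exists k, v = lo k)) as [y [hub hlub]].
  - exists (up 0%nat). intros v [k ->]. apply hcross.
  - exists (lo 0%nat), 0%nat. reflexivity.
  - exists y. intros k. split.
    + apply hub. now exists k.
    + apply hlub. intros v [j ->]. apply hcross.
Qed.

Lemma Rdiv_le_iff (a z h : R) : 0 < h -> a / h <= z <-> a <= z * h.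
Proof.
  intros hh. split; intros hz.
  - replace a with (a / h * h) by (field; lra). now apply Rmult_le_compat_r; [lra|].
  - replace z with (z * h / h) by (field; lra).
    apply Rmult_le_compat_r; [left; now apply Rinv_0_lt_compat|exact hz].
Qed.

Lemma Rle_div_iff (z b h : R) : 0 < h -> z <= b / h <-> z * h <= b.
Proof.
  intros hh. split; intros hz.
  - replace b with (b / h * h) by (field; lra). now apply Rmult_le_compat_r; [lra|].
  - replace z with (z * h / h) by (field; lra).
    apply Rmult_le_compat_r; [left; now apply Rinv_0_lt_compat|exact hz].
Qed.

Definition grid_interval (N i : nat) (z : R) : Prop :=
  INR i / 4 ^ N <= z <= (INR i + 1) / 4 ^ N.

Lemma pow4_pos (k : nat) : 0 < 4 ^ k.
Proof. apply pow_lt; lra. Qed.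

Lemma INR_pow4 (d : nat) : INR (4 ^ d) = 4 ^ d.
Proof. rewrite pow_INR. simpl INR. f_equal. ring. Qed.

Lemma grid_interval_scaled (N i : nat) (z : R) :
  grid_interval N i z <-> INR i <= z * 4 ^ N <= INR i + 1.
Proof.
  pose proof (pow4_pos N). unfold grid_interval.
  rewrite Rdiv_le_iff, Rle_div_iff by assumption. reflexivity.
Qed.

Lemma grid_interval_parent (N d a : nat) (z : R) :
  grid_interval (N + d) a z -> grid_interval N (a / 4 ^ d) z.
Proof.
  rewrite !grid_interval_scaled, pow_add.
  set (q := (a / 4 ^ d)%nat). intros hz.
  assert (hd : (4 ^ d <> 0)%nat) by (apply Nat.pow_nonzero; lia).
  assert (hq : (q * 4 ^ d <= a /\ a + 1 <= (q + 1) * 4 ^ d)%nat).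
  { pose proof (Nat.mod_upper_bound a (4 ^ d) hd).
    pose proof (Nat.div_mod a (4 ^ d) hd). unfold q. nia. }
  destruct hq as [hq1 hq2]. apply le_INR in hq1, hq2.
  rewrite mult_INR, INR_pow4 in hq1. rewrite plus_INR, mult_INR, plus_INR, INR_pow4 in hq2.
  simpl INR in hq2. pose proof (pow4_pos d).
  split; apply Rmult_le_reg_r with (4 ^ d); nra.
Qed.

Lemma unit_subinterval (M : nat) (z : R) :
  (0 < M)%nat -> 0 <= z <= INR M -> exists t, (t < M)%nat /\ INR t <= z <= INR t + 1.
Proof.
  induction M as [|M IH]; intros hM hz; [lia|].
  destruct (Nat.eq_dec M 0) as [->|hM0].
  - exists 0%nat. simpl in *. split; [lia|lra].
  - destruct (Rle_dec z (INR M)) as [h|h].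
    + destruct (IH ltac:(lia) ltac:(lra)) as [t [ht1 ht2]]. exists t. split; [lia|lra].
    + exists M. rewrite S_INR in hz. split; [lia|lra].
Qed.

Lemma grid_interval_child (N d c : nat) (z : R) :
  grid_interval N c z -> exists c', (c' / 4 ^ d = c)%nat /\ grid_interval (N + d) c' z.
Proof.
  rewrite grid_interval_scaled. intros hz.
  assert (hd : (4 ^ d <> 0)%nat) by (apply Nat.pow_nonzero; lia).
  pose proof (pow4_pos d).
  assert (ht : 0 <= z * 4 ^ N * 4 ^ d - INR c * 4 ^ d <= INR (4 ^ d)).
  { rewrite INR_pow4. nra. }
  destruct (unit_subinterval (4 ^ d) _ ltac:(lia) ht) as [t [htd htz]].
  exists (t + c * 4 ^ d)%nat. split.
  - rewrite Nat.div_add, Nat.div_small by assumption. lia.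
  - rewrite grid_interval_scaled, plus_INR, mult_INR, INR_pow4, pow_add. lra.
Qed.

Lemma grid_intervals_nested_point (L e r : nat -> nat) :
  (forall k, L (S k) = (L k + e k)%nat) -> (forall k, (r (S k) / 4 ^ e k)%nat = r k) ->
  exists y, forall k, grid_interval (L k) (r k) y.
Proof.
  intros hL hr.
  pose (lo k := INR (r k) / 4 ^ L k).
  pose (up k := (INR (r k) + 1) / 4 ^ L k).
  assert (hparent : forall k z, grid_interval (L (S k)) (r (S k)) z -> lo k <= z <= up k).
  { intros k z hz. rewrite hL in hz. apply grid_interval_parent in hz. now rewrite hr in hz. }
  assert (hends : forall k, grid_interval (L k) (r k) (lo k) /\ grid_interval (L k) (r k) (up k)).
  { intros k. assert (lo k <= up k).
    { apply Rmult_le_compat_r; [left; apply Rinv_0_lt_compat, pow4_pos|lra]. }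
    unfold grid_interval. fold (lo k) (up k). lra. }
  destruct (nested_intervals_common_point lo up) as [y hy].
  - intros k. apply (proj1 (hends k)).
  - intros k. apply (hparent k _ (proj1 (hends (S k)))).
  - intros k. apply (hparent k _ (proj2 (hends (S k)))).
  - exists y. exact hy.
Qed.

Lemma NN_odd (n : nat -> nat) (k : nat) : NN n (2 * k + 1) = (NN n (2 * k) + n (2 * k + 1))%nat.
Proof. now rewrite Nat.add_1_r. Qed.

Lemma NN_even_succ (n : nat -> nat) (k : nat) :
  NN n (2 * S k) = (NN n (2 * k) + (n (2 * k + 1) + n (2 * k + 2)))%nat.
Proof.
  replace (2 * S k)%nat with (S (S (2 * k))) by lia.
  replace (2 * k + 2)%nat with (S (S (2 * k))) by lia.
  replace (2 * k + 1)%nat with (S (2 * k)) by lia.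
  cbn [NN]. lia.
Qed.

Close Scope R_scope.

Section Construction.

Variables (n : nat -> nat) (C : Collections).
Hypothesis hC : valid_construction n C.

Lemma cantor_set_of_even_levels (p : R * R) :
  (forall k, exists i j, C (2 * k) i j = true /\ closed_square (NN n (2 * k)) i j p) ->
  cantor_set n C p.
Proof.
  destruct hC as [_ [_ hii]]. intros heven m hm.
  destruct (Nat.Even_or_Odd m) as [[k ->]|[k ->]]; [apply heven|].
  destruct (heven (S k)) as [i [j [hij [hx hy]]]].
  replace (2 * S k)%nat with (2 * k + 2)%nat in hij by lia.
  rewrite NN_even_succ, Nat.add_assoc, <- NN_odd in hx, hy.
  exists (i / 4 ^ n (2 * k + 2))%nat, (j / 4 ^ n (2 * k + 2))%nat.
  split; [exact (proj1 (hii k) i j hij)|].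
  split; apply grid_interval_parent; assumption.
Qed.

Lemma cantor_set_fst_unit (x y : R) : cantor_set n C (x, y) -> (0 <= x <= 1)%R.
Proof.
  destruct hC as [h0 [hi _]]. intros hxy.
  destruct (hxy 1%nat ltac:(lia)) as [i [j [hij [hx _]]]].
  pose proof (proj1 (hi 0%nat) i j hij) as hparent. rewrite h0 in hparent.
  apply andb_prop in hparent as [hparent _]. apply Nat.eqb_eq in hparent.
  change (NN n 1) with (0 + n (2 * 0 + 1))%nat in hx.
  apply grid_interval_parent in hx. rewrite hparent in hx.
  unfold grid_interval in hx. simpl in hx. lra.
Qed.

Variable x : R.

Definition column_square (k : nat) (q : nat * nat) : Prop :=
  C (2 * k) (fst q) (snd q) = true /\ grid_interval (NN n (2 * k)) (fst q) x.

Lemma column_square_child (k : nat) (q : nat * nat) :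
  column_square k q -> exists q', column_square (S k) q' /\
    (snd q' / 4 ^ (n (2 * k + 1) + n (2 * k + 2)) = snd q)%nat.
Proof.
  destruct hC as [_ [_ hii]]. destruct q as [c r]. intros [hcr hx].
  destruct (grid_interval_child _ (n (2 * k + 1) + n (2 * k + 2)) _ _ hx) as [c' [hc' hx']].
  destruct (proj2 (proj2 (hii k)) c r hcr) as [hcolumn _].
  destruct (hcolumn c' hc') as [r' [hr' hc'r']].
  exists (c', r'). split; [|exact hr'].
  split; [now replace (2 * S k)%nat with (2 * k + 2)%nat by lia|].
  now rewrite NN_even_succ.
Qed.

Lemma cantor_set_fiber_nonempty : (0 <= x <= 1)%R -> exists y, cantor_set n C (x, y).
Proof.
  destruct hC as [h0 _]. intros hx.
  destruct (nat_dependent_choice column_square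
              (fun k q q' => (snd q' / 4 ^ (n (2 * k + 1) + n (2 * k + 2)) = snd q)%nat)
              (0%nat, 0%nat)) as [s hs].
  - split; [now rewrite h0|]. unfold grid_interval. simpl. lra.
  - exact column_square_child.
  - destruct (grid_intervals_nested_point (fun k => NN n (2 * k))
                (fun k => n (2 * k + 1) + n (2 * k + 2))%nat (fun k => snd (s k)))
      as [y hy].
    + apply NN_even_succ.
    + intros k. apply hs.
    + exists y. apply cantor_set_of_even_levels. intros k.
      destruct (hs k) as [[hsk hxk] _].
      exists (fst (s k)), (snd (s k)). split; [exact hsk|split; [exact hxk|apply hy]].
Qed.

End Construction.

Theorem proposition3p2 (n : nat -> nat) (C : Collections)
  (hpos : forall k, 0 < n (S k))
  (hmono : forall k, n (2 * k + 2) <= n (2 * k + 1))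
  (hC : valid_construction n C) :
  forall x : R, (0 <= x <= 1)%R <-> exists y : R, cantor_set n C (x, y).
Proof.
  intros x. split.
  - exact (cantor_set_fiber_nonempty n C hC x).
  - intros [y hxy]. exact (cantor_set_fst_unit n C hC x y hxy).
Qed.
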